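(* Let $\mathbf x,\mathbf y$ be the Heegaard states corresponding to lifted partial permutations $(\tilde S,\tilde f)$ and $(\tilde T,\tilde g)$. There exists a compactly supported $\phi\in D(\mathbf x,\mathbf y)$ if and only if $\tilde S=\tilde T$ and $\tilde f(\tilde S)=\tilde g(\tilde T)$. Moreover, if such $\phi$ exists, it is unique.
   Context: Fix integers $0<k<m$. $G_m$ is the group of isometries of $\mathbb R$ generated by $x\mapsto 1-x$ and $x\mapsto 2m-1-x$; $Q_1:\mathbb Z\to\mathbb Z/G_m\cong\{1,\dots,m-1\}$. A lifted partial permutation on $k$ letters is a pair $(\tilde S,\tilde f)$ with $\tilde S\subset\mathbb Z$ $G_m$-invariant, $|\tilde S/G_m|=k$, $\tilde f:\tilde S\to\mathbb Z$ $G_m$-equivariant with injective induced map $\tilde S/G_m\to\mathbb Z/G_m$. In $\mathbb R^2$ take vertical lines $\tilde\alpha_i=\{i\}\times\mathbb R$, horizontal lines $\tilde\beta_i=\mathbb R\times\{i\}$; $\mathbb G_m$ is generated by the $180^\circ$ rotations about $(\frac12,\frac12)$ and $(m-\frac12,m-\frac12)$; $\mathcal H=\mathbb R^2/\mathbb G_m$, with $\alpha_i,\beta_i$ ($1\le i\le m-1$) the images of $\tilde\alpha_j,\tilde\beta_j$ with $Q_1(j)=i$. A $k$-fold Heegaard state is a set of $k$ points each on some $\alpha_i\cap\beta_j$ with distinct $\alpha$'s and distinct $\beta$'s; $(\tilde S,\tilde f)$ corresponds to the image of its graph $\{(i,\tilde f(i))\}$. A two-chain is an assignment of integers to components of $\mathcal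 H\setminus(\boldsymbol\alpha\cup\boldsymbol\beta)$. At an intersection point of $\alpha_i$ and $\beta_j$ with local multiplicities $A,B,C,D$ in the four quadrants (with $A,D$ opposite and $B,C$ opposite, oriented as in the standard convention), the point is an initial corner if $B+C=A+D+1$, a terminal corner if $B+C=A+D-1$, and not a corner if $A+D=B+C$. $D(\mathbf x,\mathbf y)$ is the set of two-chains whose initial corners are exactly the points of $\mathbf x\setminus\mathbf y$ and terminal corners exactly the points of $\mathbf y\setminus\mathbf x$ (with no other corners). *)

From Stdlib Require Import ZArith List.
Open Scope Z_scope.

Definition refl1 (x : Z) : Z := 1 - x.
Definition refl2 (m : nat) (x : Z) : Z := 2 * Z.of_nat m - 1 - x.

(* orbit relation of the group generated by refl1, refl2 (both involutions) *)
Inductive zorb (m : nat) (i : Z) : Z -> Prop :=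
| zorb_refl : zorb m i i
| zorb_s1 : forall j, zorb m i j -> zorb m i (refl1 j)
| zorb_s2 : forall j, zorb m i j -> zorb m i (refl2 m j).

(* Lifted partial permutation (S~, f~) on k letters.  S~/G_m is counted via
   the identification Z/G_m = {1,...,m-1} given by Q_1. *)
Definition LiftedPartialPerm (m k : nat) (S : Z -> Prop) (f : Z -> Z) : Prop :=
  (forall i, S i -> S (refl1 i) /\ S (refl2 m i)) /\
  (exists l : list Z, NoDup l /\ length l = k /\
     forall i, In i l <-> (1 <= i <= Z.of_nat m - 1 /\ S i)) /\
  (forall i, S i -> f (refl1 i) = refl1 (f i) /\ f (refl2 m i) = refl2 m (f i)) /\
  (forall i j, S i -> S j -> zorb m (f i) (f j) -> zorb m i j).

(* lattice points (p,q) = intersections of alpha~_p and beta~_q *)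
(* 180-degree rotations about (1/2,1/2) and (m-1/2,m-1/2) on lattice points *)
Definition rot1 (P : Z * Z) : Z * Z := (refl1 (fst P), refl1 (snd P)).
Definition rot2 (m : nat) (P : Z * Z) : Z * Z := (refl2 m (fst P), refl2 m (snd P)).

(* components of R^2 \ (alpha~ u beta~): open unit squares, indexed by their
   lower-left corner (a,b) = (a,a+1)x(b,b+1).  A rotation r maps the square
   with corners (a,b),(a+1,b+1) to the square whose lower-left corner is
   r (a+1,b+1). *)
Definition sq_act (r : Z * Z -> Z * Z) (s : Z * Z) : Z * Z :=
  r (fst s + 1, snd s + 1).

Inductive sqorb (m : nat) (s : Z * Z) : Z * Z -> Prop :=
| sqorb_refl : sqorb m s s
| sqorb_s1 : forall t, sqorb m s t -> sqorb m s (sq_act rot1 t)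
| sqorb_s2 : forall t, sqorb m s t -> sqorb m s (sq_act (rot2 m) t).

(* A two-chain on H = R^2 / GG_m: an integer on each component of
   H \ (alpha u beta), i.e. a GG_m-invariant function on squares. *)
Definition TwoChain (m : nat) (phi : Z * Z -> Z) : Prop :=
  forall s, phi (sq_act rot1 s) = phi s /\ phi (sq_act (rot2 m) s) = phi s.

(* compactly supported: only finitely many components of H \ (alpha u beta)
   (= GG_m-orbits of squares) carry nonzero multiplicity *)
Definition CompactSupport (m : nat) (phi : Z * Z -> Z) : Prop :=
  exists L : list (Z * Z),
    forall s, phi s <> 0 -> exists s0, In s0 L /\ sqorb m s0 s.

(* Heegaard state of (S~, f~): image in H of the graph {(i, f~ i)}.
   A lattice point lies over a point of the state iff it is in the graph
   (the graph is GG_m-invariant). *)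
Definition inState (S : Z -> Prop) (f : Z -> Z) (P : Z * Z) : Prop :=
  S (fst P) /\ snd P = f (fst P).

(* local multiplicities at the lattice point P = (p,q):
   A = NW, B = NE, C = SW, D = SE quadrant; A,D opposite; B,C opposite. *)
Definition multA (phi : Z * Z -> Z) (P : Z * Z) : Z := phi (fst P - 1, snd P).
Definition multB (phi : Z * Z -> Z) (P : Z * Z) : Z := phi (fst P, snd P).
Definition multC (phi : Z * Z -> Z) (P : Z * Z) : Z := phi (fst P - 1, snd P - 1).
Definition multD (phi : Z * Z -> Z) (P : Z * Z) : Z := phi (fst P, snd P - 1).

Definition initialCorner (phi : Z * Z -> Z) (P : Z * Z) : Prop :=
  multB phi P + multC phi P = multA phi P + multD phi P + 1.
Definition terminalCorner (phi : Z * Z -> Z) (P : Z * Z) : Prop :=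
  multB phi P + multC phi P = multA phi P + multD phi P - 1.
Definition notCorner (phi : Z * Z -> Z) (P : Z * Z) : Prop :=
  multA phi P + multD phi P = multB phi P + multC phi P.

Definition inD (m : nat) (S : Z -> Prop) (f : Z -> Z) (T : Z -> Prop) (g : Z -> Z)
  (phi : Z * Z -> Z) : Prop :=
  TwoChain m phi /\
  forall P : Z * Z,
    ((inState S f P /\ ~ inState T g P) -> initialCorner phi P) /\
    ((inState T g P /\ ~ inState S f P) -> terminalCorner phi P) /\
    ((~ (inState S f P /\ ~ inState T g P) /\ ~ (inState T g P /\ ~ inState S f P))
       -> notCorner phi P).

Definition imageOf (S : Z -> Prop) (f : Z -> Z) (j : Z) : Prop :=
  exists i, S i /\ f i = j.

From Stdlib Require Import ZArith List Lia Classical ClassicalEpsilon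
  FunctionalExtensionality PropExtensionality.
Open Scope Z_scope.

(* At a lattice point
   P = (p,q) the corner conditions only involve the mixed second difference
     corner phi P = phi(p,q) + phi(p-1,q-1) - phi(p-1,q) - phi(p,q-1) = B + C - A - D,
   so phi is in D(x,y) iff it is a two-chain with corner phi P = [P in x] - [P in y].
   The rotations generating GG_m preserve |b - a|, so a compactly supported chain
   vanishes outside a diagonal band |b - a| <= K.  For band-supported chains:
   - a corner-free chain that is constant on each side of the band is constant;
     this gives uniqueness, and shows that a chain whose prescribed corners are
     invariant under a rotation is itself invariant (hence a two-chain);
   - a column (or row) of nonnegative corners is corner-free; this forces every
     letter of S~ into T~ and every value of f~ into g~(T~), and symmetrically;
   - conversely, if S~ = T~ and f~(S~) = g~(S~), the discrete integral of the
     prescribed corners is band-supported: beyond the band it equals a difference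
     of two flux counts, which is independent of the level because the images
     agree, and zero because the rotation about (1/2,1/2) negates it.
   Symmetry, injectivity and bounded displacement of lifted partial permutations
   come from the orbit structure of G_m on Z. *)

Definition ind (P : Prop) : Z := if excluded_middle_informative P then 1 else 0.

Lemma ind1 (P : Prop) : P -> ind P = 1.
Proof. unfold ind; destruct (excluded_middle_informative P); tauto. Qed.

Lemma ind0 (P : Prop) : ~ P -> ind P = 0.
Proof. unfold ind; destruct (excluded_middle_informative P); tauto. Qed.

Lemma ind_iff (P Q : Prop) : (P <-> Q) -> ind P = ind Q.
Proof. intros H; destruct (classic P); [rewrite !ind1 | rewrite !ind0]; tauto. Qed.

Lemma ind_range (P : Prop) : 0 <= ind P <= 1.
Proof. destruct (classic P); [rewrite ind1 | rewrite ind0]; auto; lia. Qed.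

Lemma ind_split (P : Prop) (b x : Z) :
  ind (P /\ b - 1 < x) = ind (P /\ b < x) + ind (P /\ b = x).
Proof.
  unfold ind; repeat destruct excluded_middle_informative; try lia;
    exfalso; firstorder lia.
Qed.

Fixpoint sumZ (lo : Z) (n : nat) (h : Z -> Z) : Z :=
  match n with O => 0 | Datatypes.S n' => h lo + sumZ (lo + 1) n' h end.

Lemma sumZ_ext (lo : Z) (n : nat) (h k : Z -> Z) :
  (forall i, lo <= i < lo + Z.of_nat n -> h i = k i) -> sumZ lo n h = sumZ lo n k.
Proof.
  revert lo; induction n as [|n IH]; intros lo H; cbn [sumZ]; auto.
  rewrite (H lo) by lia. f_equal. apply IH. intros i Hi; apply H; lia.
Qed.

Lemma sumZ_add (lo : Z) (n : nat) (h k : Z -> Z) :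
  sumZ lo n (fun i => h i + k i) = sumZ lo n h + sumZ lo n k.
Proof. revert lo; induction n as [|n IH]; intros; cbn [sumZ]; [lia | rewrite IH; lia]. Qed.

Lemma sumZ_sub (lo : Z) (n : nat) (h k : Z -> Z) :
  sumZ lo n (fun i => h i - k i) = sumZ lo n h - sumZ lo n k.
Proof. revert lo; induction n as [|n IH]; intros; cbn [sumZ]; [lia | rewrite IH; lia]. Qed.

Lemma sumZ_last (lo : Z) (n : nat) (h : Z -> Z) :
  sumZ lo (Datatypes.S n) h = sumZ lo n h + h (lo + Z.of_nat n).
Proof.
  revert lo; induction n as [|n IH]; intros lo.
  - cbn [sumZ]. replace (lo + Z.of_nat 0) with lo by lia. lia.
  - change (sumZ lo (Datatypes.S (Datatypes.S n)) h)
      with (h lo + sumZ (lo + 1) (Datatypes.S n) h).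
    rewrite IH. cbn [sumZ].
    replace (lo + 1 + Z.of_nat n) with (lo + Z.of_nat (Datatypes.S n)) by lia. lia.
Qed.

Lemma sumZ_zero (lo : Z) (n : nat) (h : Z -> Z) :
  (forall i, lo <= i < lo + Z.of_nat n -> h i = 0) -> sumZ lo n h = 0.
Proof.
  intros H. rewrite (sumZ_ext lo n h (fun _ => 0) H). clear H.
  revert lo; induction n as [|n IH]; intros lo; cbn [sumZ]; [reflexivity | rewrite IH; lia].
Qed.

Lemma sumZ_single (lo : Z) (n : nat) (h : Z -> Z) (p : Z) :
  lo <= p < lo + Z.of_nat n ->
  (forall i, lo <= i < lo + Z.of_nat n -> i <> p -> h i = 0) -> sumZ lo n h = h p.
Proof.
  revert lo; induction n as [|n IH]; intros lo Hp H; [lia|]. cbn [sumZ].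
  destruct (Z.eq_dec p lo) as [->|Hne].
  - rewrite sumZ_zero; [lia|]. intros i Hi; apply H; lia.
  - rewrite (H lo), IH by (lia || (intros i Hi Hip; apply H; lia)). lia.
Qed.

Lemma nondecreasing_from (h : Z -> Z) (q0 : Z) :
  (forall q, q0 < q -> h (q - 1) <= h q) -> forall q, q0 <= q -> h q0 <= h q.
Proof.
  intros Hinc q Hq.
  replace q with (q0 + Z.of_nat (Z.to_nat (q - q0))) by lia.
  induction (Z.to_nat (q - q0)) as [|n IH].
  - replace (q0 + Z.of_nat 0) with q0 by lia. lia.
  - specialize (Hinc (q0 + Z.of_nat (Datatypes.S n)) ltac:(lia)).
    replace (q0 + Z.of_nat (Datatypes.S n) - 1) with (q0 + Z.of_nat n) in Hinc by lia.
    lia.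
Qed.

Lemma constant_from (h : Z -> Z) (q0 : Z) :
  (forall q, q0 < q -> h q = h (q - 1)) -> forall q, q0 <= q -> h q = h q0.
Proof.
  intros Hstep q Hq.
  pose proof (nondecreasing_from h q0
    ltac:(intros r Hr; specialize (Hstep r Hr); lia) q Hq).
  pose proof (nondecreasing_from (fun r => - h r) q0
    ltac:(intros r Hr; specialize (Hstep r Hr); cbn beta; lia) q Hq).
  cbn beta in *. lia.
Qed.

Lemma constant (h : Z -> Z) : (forall q, h q = h (q - 1)) -> forall q q', h q = h q'.
Proof.
  intros Hstep q q'.
  pose proof (constant_from h (Z.min q q') (fun r _ => Hstep r) q ltac:(lia)).
  pose proof (constant_from h (Z.min q q') (fun r _ => Hstep r) q' ltac:(lia)).
  congruence.
Qed.

Definition corner (phi : Z * Z -> Z) (P : Z * Z) : Z :=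
  multB phi P + multC phi P - multA phi P - multD phi P.

Definition prescribed (S : Z -> Prop) (f : Z -> Z) (T : Z -> Prop) (g : Z -> Z)
  (p q : Z) : Z :=
  ind (inState S f (p, q)) - ind (inState T g (p, q)).

Lemma inD_iff_corner (m : nat) (S T : Z -> Prop) (f g : Z -> Z) (phi : Z * Z -> Z) :
  inD m S f T g phi <->
  TwoChain m phi /\ forall p q, corner phi (p, q) = prescribed S f T g p q.
Proof.
  unfold inD, prescribed, corner, initialCorner, terminalCorner, notCorner.
  split; intros [Htwo H]; split; auto.
  - intros p q. destruct (H (p, q)) as (Hi & Ht & Hn).
    unfold ind; destruct excluded_middle_informative, excluded_middle_informative;
      first [specialize (Hi ltac:(tauto)) | specialize (Ht ltac:(tauto))
            | specialize (Hn ltac:(tauto))]; lia.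
  - intros [p q]. specialize (H p q). revert H.
    unfold ind; destruct excluded_middle_informative, excluded_middle_informative;
      intros H; repeat split; intros Hc; try tauto; lia.
Qed.

Lemma corner_sub (F G : Z * Z -> Z) (P : Z * Z) :
  corner (fun s => F s - G s) P = corner F P - corner G P.
Proof. unfold corner, multA, multB, multC, multD. lia. Qed.

Lemma corner_opp (phi : Z * Z -> Z) (P : Z * Z) :
  corner (fun s => - phi s) P = - corner phi P.
Proof. unfold corner, multA, multB, multC, multD. lia. Qed.

Lemma corner_transpose (phi : Z * Z -> Z) (p q : Z) :
  corner (fun s => phi (snd s, fst s)) (p, q) = corner phi (q, p).
Proof. unfold corner, multA, multB, multC, multD; cbn [fst snd]. lia. Qed.

(* The point reflection x |-> c - x of the plane sends square (a,b) to square
   (c - (a+1), c - (b+1)) and lattice point (p,q) to (c - p, c - q). *)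
Lemma corner_reflect (c : Z) (phi : Z * Z -> Z) (p q : Z) :
  corner (fun s => phi (c - (fst s + 1), c - (snd s + 1))) (p, q) = corner phi (c - p, c - q).
Proof.
  unfold corner, multA, multB, multC, multD; cbn [fst snd].
  replace (c - (p + 1)) with (c - p - 1) by lia.
  replace (c - (q + 1)) with (c - q - 1) by lia.
  replace (c - (p - 1 + 1)) with (c - p) by lia.
  replace (c - (q - 1 + 1)) with (c - q) by lia.
  lia.
Qed.

Definition Band (K : Z) (phi : Z * Z -> Z) : Prop :=
  forall a b, K < Z.abs (b - a) -> phi (a, b) = 0.

(* A corner-free chain that is constant on each side of a diagonal band is constant:
   column differences are constant in b and vanish far below the diagonal. *)
Lemma corner_free_constant (psi : Z * Z -> Z) (K alpha beta : Z) :
  (forall p q, corner psi (p, q) = 0) ->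
  (forall a b, K < a - b -> psi (a, b) = alpha) ->
  (forall a b, K < b - a -> psi (a, b) = beta) ->
  alpha = beta /\ forall s, psi s = alpha.
Proof.
  intros Hflat Hright Hleft.
  assert (Hrow : forall a b, psi (a, b) = psi (a - 1, b)).
  { intros a b.
    assert (Hstep : forall q, psi (a, q) - psi (a - 1, q) = psi (a, q - 1) - psi (a - 1, q - 1)).
    { intros q. specialize (Hflat a q).
      unfold corner, multA, multB, multC, multD in Hflat; cbn [fst snd] in Hflat. lia. }
    pose proof (constant (fun q => psi (a, q) - psi (a - 1, q)) Hstep b (a - K - 2)) as E.
    cbn beta in E. rewrite (Hright a (a - K - 2)), (Hright (a - 1) (a - K - 2)) in E by lia. lia. }
  assert (Hval : forall a b, psi (a, b) = alpha /\ psi (a, b) = beta).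
  { intros a b.
    pose proof (constant (fun x => psi (x, b)) (fun x => Hrow x b)) as Hc. cbn beta in Hc.
    split; [rewrite (Hc a (b + K + 1)); apply Hright | rewrite (Hc a (b - K - 1)); apply Hleft];
      lia. }
  split; [destruct (Hval 0 0); congruence | intros [a b]; apply Hval].
Qed.

(* In a band-supported chain, a column of nonnegative corners has only zero corners:
   the column difference is nondecreasing and vanishes at both ends. *)
Lemma nonneg_column_flat (phi : Z * Z -> Z) (K p : Z) :
  Band K phi -> (forall q, 0 <= corner phi (p, q)) -> forall q, corner phi (p, q) = 0.
Proof.
  intros Hband Hnn q.
  set (h := fun r => phi (p, r) - phi (p - 1, r)).
  assert (Hinc : forall r, corner phi (p, r) = h r - h (r - 1)).
  { intros r. unfold h, corner, multA, multB, multC, multD; cbn [fst snd]. lia. }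
  assert (Hmono : forall r, h (r - 1) <= h r)
    by (intros r; specialize (Hnn r); rewrite Hinc in Hnn; lia).
  assert (Hfar : forall r, K + 1 < Z.abs (r - p) -> h r = 0).
  { intros r Hr. unfold h. rewrite !Hband by lia. reflexivity. }
  pose proof (nondecreasing_from h (Z.min (q - 1) (p - K - 2)) (fun r _ => Hmono r) (q - 1)
    ltac:(lia)) as Hleft.
  pose proof (nondecreasing_from h q (fun r _ => Hmono r) (Z.max q (p + K + 2)) ltac:(lia))
    as Hright.
  rewrite (Hfar (Z.min (q - 1) (p - K - 2))) in Hleft by lia.
  rewrite (Hfar (Z.max q (p + K + 2))) in Hright by lia. rewrite Hinc. specialize (Hmono q). lia.
Qed.

Lemma nonneg_row_flat (phi : Z * Z -> Z) (K q : Z) :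
  Band K phi -> (forall p, 0 <= corner phi (p, q)) -> forall p, corner phi (p, q) = 0.
Proof.
  intros Hband Hnn p.
  rewrite <- corner_transpose.
  apply (nonneg_column_flat _ K q).
  - intros a b Hab. cbn [fst snd]. apply Hband. lia.
  - intros r. rewrite corner_transpose. apply Hnn.
Qed.

(* If the corners of a band-supported chain are those prescribed by D(x,y), then
   every letter of S~ is a letter of T~ and every value of f~ is a value of g~:
   otherwise a column (resp. row) would carry a single nonzero corner, of sign +1. *)
Lemma graph_included (S T : Z -> Prop) (f g : Z -> Z) (phi : Z * Z -> Z) (K : Z) :
  Band K phi -> (forall p q, corner phi (p, q) = prescribed S f T g p q) ->
  (forall i, S i -> T i) /\ (forall j, imageOf S f j -> imageOf T g j).
Proof.
  intros Hband Hcorner. split.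
  - intros i Si. apply NNPP; intros nTi.
    assert (HT0 : forall q, ind (inState T g (i, q)) = 0)
      by (intros q; apply ind0; intros [Ti _]; tauto).
    assert (Hnn : forall q, 0 <= corner phi (i, q)).
    { intros q. rewrite Hcorner. unfold prescribed. rewrite HT0.
      pose proof (ind_range (inState S f (i, q))). lia. }
    pose proof (nonneg_column_flat phi K i Hband Hnn (f i)) as Hflat.
    rewrite Hcorner in Hflat. unfold prescribed in Hflat.
    rewrite HT0, ind1 in Hflat by (split; cbn; auto). lia.
  - intros j [p0 [Sp0 <-]]. apply NNPP; intros nIm.
    assert (HT0 : forall p, ind (inState T g (p, f p0)) = 0).
    { intros p. apply ind0. intros [Tp Hp]. apply nIm. exists p. cbn in *. auto. }
    assert (Hnn : forall p, 0 <= corner phi (p, f p0)).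
    { intros p. rewrite Hcorner. unfold prescribed. rewrite HT0.
      pose proof (ind_range (inState S f (p, f p0))). lia. }
    pose proof (nonneg_row_flat phi K (f p0) Hband Hnn p0) as Hflat.
    rewrite Hcorner in Hflat. unfold prescribed in Hflat.
    rewrite HT0, ind1 in Hflat by (split; cbn; auto). lia.
Qed.

Definition SymmetricAbout (c : Z) (S : Z -> Prop) (f : Z -> Z) : Prop :=
  forall i, S i -> S (c - i) /\ f (c - i) = c - f i.

Lemma inState_reflect (c : Z) (S : Z -> Prop) (f : Z -> Z) (p q : Z) :
  SymmetricAbout c S f -> (inState S f (c - p, c - q) <-> inState S f (p, q)).
Proof.
  intros Hsym. unfold inState; cbn [fst snd]. split.
  - intros [Sp Hq]. destruct (Hsym _ Sp) as [Sp' Hf].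
    replace (c - (c - p)) with p in * by lia. split; [exact Sp' | lia].
  - intros [Sp ->]. destruct (Hsym _ Sp) as [Sp' Hf]. split; [exact Sp' | lia].
Qed.

Lemma prescribed_reflect (c : Z) (S T : Z -> Prop) (f g : Z -> Z) (p q : Z) :
  SymmetricAbout c S f -> SymmetricAbout c T g ->
  prescribed S f T g (c - p) (c - q) = prescribed S f T g p q.
Proof.
  intros Hf Hg. unfold prescribed.
  now rewrite (ind_iff _ _ (inState_reflect c S f p q Hf)),
              (ind_iff _ _ (inState_reflect c T g p q Hg)).
Qed.

Lemma reflection_corner_free (c : Z) (phi : Z * Z -> Z) (delta : Z -> Z -> Z) :
  (forall p q, corner phi (p, q) = delta p q) ->
  (forall p q, delta (c - p) (c - q) = delta p q) ->
  forall p q, corner (fun s => phi (c - (fst s + 1), c - (snd s + 1)) - phi s) (p, q) = 0.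
Proof. intros Hc Hsym p q. rewrite corner_sub, corner_reflect, !Hc, Hsym. lia. Qed.

Lemma reflection_invariant (c : Z) (phi : Z * Z -> Z) (delta : Z -> Z -> Z) (K : Z) :
  Band K phi -> (forall p q, corner phi (p, q) = delta p q) ->
  (forall p q, delta (c - p) (c - q) = delta p q) ->
  forall a b, phi (c - (a + 1), c - (b + 1)) = phi (a, b).
Proof.
  intros Hband Hc Hsym a b.
  assert (Hzero : forall s, phi (c - (fst s + 1), c - (snd s + 1)) - phi s = 0).
  { refine (proj2 (corner_free_constant _ K 0 0 (reflection_corner_free c phi delta Hc Hsym)
             _ _)); intros x y Hxy; cbn [fst snd]; rewrite !Hband by lia; reflexivity. }
  specialize (Hzero (a, b)). cbn [fst snd] in Hzero. lia.
Qed.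

Lemma twoChain_of_corners (m : nat) (phi : Z * Z -> Z) (K : Z) (delta : Z -> Z -> Z) :
  Band K phi -> (forall p q, corner phi (p, q) = delta p q) ->
  (forall c, (c = 1 \/ c = 2 * Z.of_nat m - 1) ->
     forall p q, delta (c - p) (c - q) = delta p q) ->
  TwoChain m phi.
Proof.
  intros Hband Hc Hsym [a b]. unfold sq_act, rot1, rot2, refl1, refl2; cbn [fst snd].
  split.
  - exact (reflection_invariant 1 phi delta K Hband Hc (Hsym _ (or_introl eq_refl)) a b).
  - exact (reflection_invariant _ phi delta K Hband Hc (Hsym _ (or_intror eq_refl)) a b).
Qed.

(* The translation length of G_m (and of GG_m, along the diagonal). *)
Definition period (m : nat) : Z := 2 * Z.of_nat m - 2.

Lemma sqorb_diagonal_distance (m : nat) (s t : Z * Z) :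
  sqorb m s t -> Z.abs (snd t - fst t) = Z.abs (snd s - fst s).
Proof.
  induction 1 as [|t _ IH|t _ IH]; auto;
    destruct t; unfold sq_act, rot1, rot2, refl1, refl2 in *; cbn [fst snd] in *; lia.
Qed.

Lemma band_of_compact_support (m : nat) (phi : Z * Z -> Z) :
  CompactSupport m phi -> exists K, Band K phi.
Proof.
  intros [L HL].
  assert (HK : exists K, forall s0, In s0 L -> Z.abs (snd s0 - fst s0) <= K).
  { clear HL. induction L as [|x L [K IH]]; [exists 0; intros _ []|].
    exists (Z.max K (Z.abs (snd x - fst x))).
    intros s0 [<-|H]; [lia | specialize (IH _ H); lia]. }
  destruct HK as [K HK]. exists K. intros a b Hab.
  destruct (Z.eq_dec (phi (a, b)) 0) as [|Hn]; auto.
  destruct (HL _ Hn) as [s0 [Hin Hs]]. apply sqorb_diagonal_distance in Hs.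
  specialize (HK _ Hin). cbn [fst snd] in Hs. lia.
Qed.

Lemma sqorb_shift (m : nat) (s : Z * Z) (n : Z) :
  sqorb m s (fst s + n * period m, snd s + n * period m).
Proof.
  induction n as [|n IH|n IH] using Z.peano_ind.
  - replace (fst s + 0 * period m, snd s + 0 * period m) with s
      by (destruct s; cbn; f_equal; lia).
    apply sqorb_refl.
  - replace (fst s + Z.succ n * period m, snd s + Z.succ n * period m)
      with (sq_act (rot2 m) (sq_act rot1 (fst s + n * period m, snd s + n * period m)))
      by (unfold sq_act, rot1, rot2, refl1, refl2, period; cbn [fst snd]; f_equal; lia).
    apply sqorb_s2, sqorb_s1, IH.
  - replace (fst s + Z.pred n * period m, snd s + Z.pred n * period m)
      with (sq_act rot1 (sq_act (rot2 m) (fst s + n * period m, snd s + n * period m)))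
      by (unfold sq_act, rot1, rot2, refl1, refl2, period; cbn [fst snd]; f_equal; lia).
    apply sqorb_s1, sqorb_s2, IH.
Qed.

Definition zrange (lo : Z) (n : nat) : list Z := map (fun i => lo + Z.of_nat i) (seq 0 n).

Lemma in_zrange (lo : Z) (n : nat) (x : Z) : lo <= x < lo + Z.of_nat n -> In x (zrange lo n).
Proof.
  intros H. unfold zrange. apply in_map_iff. exists (Z.to_nat (x - lo)).
  split; [lia | apply in_seq; lia].
Qed.

(* Conversely, a band meets only finitely many GG_m-orbits of squares: every square
   of the band is a translate of one with 0 <= a < period m. *)
Lemma compact_support_of_band (m : nat) (phi : Z * Z -> Z) (K : Z) :
  (2 <= m)%nat -> Band K phi -> CompactSupport m phi.
Proof.
  intros Hm Hband.
  exists (flat_map (fun a0 => map (fun d => (a0, a0 + d)) (zrange (- K) (Z.to_nat (2 * K + 1))))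
                   (zrange 0 (Z.to_nat (period m)))).
  intros [a b] Hab.
  assert (Hd : Z.abs (b - a) <= K) by (destruct (Z_lt_le_dec K (Z.abs (b - a))); auto;
    exfalso; apply Hab, Hband; lia).
  assert (HD : 0 < period m) by (unfold period; lia).
  pose proof (Z.div_mod a (period m) ltac:(lia)). pose proof (Z.mod_pos_bound a (period m) HD).
  exists (a mod period m, a mod period m + (b - a)). split.
  - apply in_flat_map. exists (a mod period m). split; [apply in_zrange; lia|].
    apply in_map_iff. exists (b - a). split; auto. apply in_zrange; lia.
  - pose proof (sqorb_shift m (a mod period m, a mod period m + (b - a)) (a / period m)) as Hs.
    cbn [fst snd] in Hs.
    replace (a mod period m + a / period m * period m) with a in Hs by lia.
    replace (a mod period m + (b - a) + a / period m * period m) with b in Hs by lia.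
    exact Hs.
Qed.

Lemma lpp_symmetric (m k : nat) (S : Z -> Prop) (f : Z -> Z) :
  LiftedPartialPerm m k S f -> SymmetricAbout 1 S f /\ SymmetricAbout (2 * Z.of_nat m - 1) S f.
Proof.
  intros (Hinv & _ & Heqv & _). split; intros i Si.
  - exact (conj (proj1 (Hinv i Si)) (proj1 (Heqv i Si))).
  - exact (conj (proj2 (Hinv i Si)) (proj2 (Heqv i Si))).
Qed.

Lemma zorb_char (m : nat) (S : Z -> Prop) (u : Z -> Z) (i j : Z) :
  SymmetricAbout 1 S u -> SymmetricAbout (2 * Z.of_nat m - 1) S u -> zorb m i j -> S i ->
  S j /\ exists n, (j = i + n * period m /\ u j = u i + n * period m) \/
                   (j = 1 - i + n * period m /\ u j = 1 - u i + n * period m).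
Proof.
  intros H1 H2 Hz Si. unfold period.
  induction Hz as [|j Hz IH|j Hz IH].
  - split; [exact Si|]. exists 0. left. lia.
  - destruct IH as [Sj [n Hn]]. destruct (H1 j Sj) as [Sj' Hu].
    unfold refl1. rewrite Hu. split; [exact Sj'|]. exists (- n).
    destruct Hn as [[E1 E2]|[E1 E2]]; [right | left]; lia.
  - destruct IH as [Sj [n Hn]]. destruct (H2 j Sj) as [Sj' Hu].
    unfold refl2. rewrite Hu. split; [exact Sj'|]. exists (1 - n).
    destruct Hn as [[E1 E2]|[E1 E2]]; [right | left]; lia.
Qed.

Lemma zorb_shift (m : nat) (i n : Z) : zorb m i (i + n * period m).
Proof.
  induction n as [|n IH|n IH] using Z.peano_ind.
  - replace (i + 0 * period m) with i by lia. apply zorb_refl.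
  - replace (i + Z.succ n * period m) with (refl2 m (refl1 (i + n * period m)))
      by (unfold refl1, refl2, period; lia).
    apply zorb_s2, zorb_s1, IH.
  - replace (i + Z.pred n * period m) with (refl1 (refl2 m (i + n * period m)))
      by (unfold refl1, refl2, period; lia).
    apply zorb_s1, zorb_s2, IH.
Qed.

Lemma zorb_window (m : nat) (i : Z) :
  (2 <= m)%nat -> exists r, 1 <= r <= Z.of_nat m - 1 /\ zorb m i r.
Proof.
  intros Hm.
  assert (HD : 0 < period m) by (unfold period; lia).
  pose proof (Z.mod_pos_bound i (period m) HD). pose proof (Z.div_mod i (period m) ltac:(lia)).
  assert (Ht : zorb m i (i mod period m)).
  { replace (i mod period m) with (i + - (i / period m) * period m) by lia. apply zorb_shift. }
  destruct (Z_le_gt_dec 1 (i mod period m));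
    [destruct (Z_le_gt_dec (i mod period m) (Z.of_nat m - 1))|].
  - exists (i mod period m). auto.
  - exists (refl2 m (i mod period m)).
    split; [unfold refl2, period in *; lia | apply zorb_s2, Ht].
  - exists (refl1 (i mod period m)).
    split; [unfold refl1; lia | apply zorb_s1, Ht].
Qed.

Lemma lpp_injective (m k : nat) (S : Z -> Prop) (f : Z -> Z) :
  LiftedPartialPerm m k S f -> forall i j, S i -> S j -> f i = f j -> i = j.
Proof.
  intros HL i j Si Sj Hf. destruct (lpp_symmetric m k S f HL) as [H1 H2].
  destruct HL as (_ & _ & _ & Hinj).
  assert (Hz : zorb m i j) by (apply Hinj; auto; rewrite Hf; apply zorb_refl).
  (* f j = 1 - f i + n * period is impossible by parity *)
  destruct (zorb_char m S f i j H1 H2 Hz Si) as [_ [n [[E1 E2]|[E1 E2]]]];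
    unfold period in *; lia.
Qed.

Lemma list_bound (u : Z -> Z) (l : list Z) :
  exists C, 1 <= C /\ forall i, In i l -> Z.abs (u i - i) < C.
Proof.
  induction l as [|a l [C [HC H]]]; [exists 1; split; [lia | intros i []]|].
  exists (Z.max C (Z.abs (u a - a) + 1)). split; [lia|].
  intros i [<-|Hi]; [lia | specialize (H i Hi); lia].
Qed.

(* A lifted partial permutation moves points by a bounded amount: the displacement
   |f p - p| is G_m-invariant and only finitely many orbits meet S~. *)
Lemma lpp_bounded (m k : nat) (S : Z -> Prop) (f : Z -> Z) :
  (2 <= m)%nat -> LiftedPartialPerm m k S f ->
  exists C, 1 <= C /\ forall p, S p -> Z.abs (f p - p) < C.
Proof.
  intros Hm HL. destruct (lpp_symmetric m k S f HL) as [H1 H2].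
  destruct HL as (_ & [l [_ [_ Hl]]] & _ & _).
  destruct (list_bound f l) as [C [HC Hb]]. exists C. split; [exact HC|].
  intros p Sp. destruct (zorb_window m p Hm) as [r [Hr Hz]].
  destruct (zorb_char m S f p r H1 H2 Hz Sp) as [Sr [n Hn]].
  pose proof (Hb r (proj2 (Hl r) (conj Hr Sr))).
  destruct Hn as [[E1 E2]|[E1 E2]]; lia.
Qed.

Section Flux.

Variables (S : Z -> Prop) (u : Z -> Z) (C : Z).
Hypothesis HC : 0 <= C.
Hypothesis Hbound : forall p, S p -> Z.abs (u p - p) < C.
Hypothesis Hinj : forall i j, S i -> S j -> u i = u j -> i = j.

Definition above (b p : Z) : Z := ind (S p /\ b < u p).

(* The number of points of S mapped strictly above level b; only points within
   distance C of b can be counted, so this is a finite sum. *)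
Definition flux (b : Z) : Z := sumZ (b - C) (Z.to_nat (2 * C + 1)) (above b).

Lemma flux_step (b : Z) :
  flux b = flux (b - 1) + ind (S (b + C)) - ind (imageOf S u b).
Proof.
  unfold flux.
  replace (Z.to_nat (2 * C + 1)) with (Datatypes.S (Z.to_nat (2 * C))) by lia.
  remember (Z.to_nat (2 * C)) as n eqn:En.
  assert (Hn : Z.of_nat n = 2 * C) by lia.
  assert (Htop : above b (b + C) = ind (S (b + C))).
  { apply ind_iff. split; [tauto|]. intros Sp. split; [exact Sp|].
    specialize (Hbound _ Sp). lia. }
  assert (Hbot : above (b - 1) (b - 1 - C) = 0).
  { apply ind0. intros [Sp Hp]. specialize (Hbound _ Sp). lia. }
  assert (Hsplit : sumZ (b - C) n (above (b - 1)) =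
                   sumZ (b - C) n (above b) + sumZ (b - C) n (fun p => ind (S p /\ b = u p))).
  { rewrite <- sumZ_add. apply sumZ_ext. intros p _. apply ind_split. }
  assert (Hhit : sumZ (b - C) n (fun p => ind (S p /\ b = u p)) = ind (imageOf S u b)).
  { destruct (classic (imageOf S u b)) as [[p0 [Sp0 <-]]|Hnone].
    - rewrite (ind1 (imageOf S u (u p0))) by (exists p0; auto).
      rewrite (sumZ_single _ _ _ p0).
      + apply ind1. auto.
      + specialize (Hbound _ Sp0). lia.
      + intros p _ Hp. apply ind0. intros [Sp Hb].
        apply Hp, Hinj; [exact Sp | exact Sp0 | congruence].
    - rewrite ind0 by exact Hnone. apply sumZ_zero. intros p _. apply ind0.
      intros [Sp Hb]. apply Hnone. exists p. auto. }
  rewrite sumZ_last. replace (b - C + Z.of_nat n) with (b + C) by lia. rewrite Htop.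
  cbn [sumZ]. replace (b - 1 - C + 1) with (b - C) by lia.
  rewrite Hbot, Hsplit, Hhit. lia.
Qed.

End Flux.

Section Construction.

Variables (S : Z -> Prop) (f g : Z -> Z) (C : Z).
Hypothesis HC : 0 <= C.
Hypothesis Hbf : forall p, S p -> Z.abs (f p - p) < C.
Hypothesis Hbg : forall p, S p -> Z.abs (g p - p) < C.
Hypothesis Hif : forall i j, S i -> S j -> f i = f j -> i = j.
Hypothesis Hig : forall i j, S i -> S j -> g i = g j -> i = j.
Hypothesis Himage : forall j, imageOf S f j <-> imageOf S g j.
Hypothesis Hsf : SymmetricAbout 1 S f.
Hypothesis Hsg : SymmetricAbout 1 S g.

Definition colWeight (b p : Z) : Z := above S g b p - above S f b p.

(* The discrete integral of the prescribed corners: the sum of the column weights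
   of the columns b - C <= p <= a (those further left contribute nothing). *)
Definition connectingChain (s : Z * Z) : Z :=
  sumZ (snd s - C) (Z.to_nat (fst s - snd s + C + 1)) (colWeight (snd s)).

Lemma colWeight_low (b p : Z) : p <= b - C -> colWeight b p = 0.
Proof.
  intros Hp. unfold colWeight, above.
  rewrite !ind0; [lia | |]; intros [Sp Hu]; pose proof (Hbf _ Sp); pose proof (Hbg _ Sp); lia.
Qed.

Lemma colWeight_high (b p : Z) : b + C <= p -> colWeight b p = 0.
Proof.
  intros Hp. unfold colWeight, above.
  rewrite (ind_iff (S p /\ b < g p) (S p)), (ind_iff (S p /\ b < f p) (S p)); [lia | |];
    split; try tauto; intros Sp; split; auto; pose proof (Hbf _ Sp); pose proof (Hbg _ Sp); lia.
Qed.

Lemma chain_below (a b : Z) : a < b - C -> connectingChain (a, b) = 0.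
Proof.
  intros H. unfold connectingChain; cbn [fst snd].
  replace (Z.to_nat (a - b + C + 1)) with 0%nat by lia. reflexivity.
Qed.

Lemma chain_column (p q : Z) :
  connectingChain (p, q) - connectingChain (p - 1, q) = colWeight q p.
Proof.
  unfold connectingChain; cbn [fst snd].
  destruct (Z_lt_le_dec p (q - C)) as [Hlow|Hhigh].
  - replace (Z.to_nat (p - q + C + 1)) with 0%nat by lia.
    replace (Z.to_nat (p - 1 - q + C + 1)) with 0%nat by lia.
    rewrite colWeight_low by lia. reflexivity.
  - replace (Z.to_nat (p - q + C + 1)) with (Datatypes.S (Z.to_nat (p - 1 - q + C + 1)))
      by lia.
    rewrite sumZ_last.
    replace (q - C + Z.of_nat (Z.to_nat (p - 1 - q + C + 1))) with p by lia. lia.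
Qed.

Lemma chain_corner (p q : Z) : corner connectingChain (p, q) = prescribed S f S g p q.
Proof.
  pose proof (chain_column p q). pose proof (chain_column p (q - 1)).
  pose proof (ind_split (S p) q (f p)). pose proof (ind_split (S p) q (g p)).
  unfold corner, multA, multB, multC, multD, colWeight, above, prescribed, inState in *;
    cbn [fst snd] in *.
  lia.
Qed.

Lemma chain_above : exists c, forall a b, b + C <= a -> connectingChain (a, b) = c.
Proof.
  assert (Hfar : forall a b, b + C <= a -> connectingChain (a, b) = connectingChain (b + C, b)).
  { intros a b Hab.
    refine (constant_from (fun x => connectingChain (x, b)) (b + C) _ a Hab).
    intros x Hx. cbn beta. pose proof (chain_column x b). rewrite colWeight_high in * by lia.
    lia. }
  assert (Hedge : forall b, connectingChain (b + C, b) = flux S g C b - flux S f C b).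
  { intros b. unfold connectingChain, flux, colWeight; cbn [fst snd].
    replace (b + C - b + C + 1) with (2 * C + 1) by lia. apply sumZ_sub. }
  assert (Hconst : forall b,
    flux S g C b - flux S f C b = flux S g C (b - 1) - flux S f C (b - 1)).
  { intros b. rewrite (flux_step S g C), (flux_step S f C) by auto.
    rewrite (ind_iff _ _ (Himage b)). lia. }
  exists (connectingChain (0 + C, 0)). intros a b Hab.
  rewrite Hfar, !Hedge by lia.
  exact (constant (fun b => flux S g C b - flux S f C b) Hconst b 0).
Qed.

(* The value beyond the band is 0: the rotation about (1/2,1/2) preserves the
   prescribed corners and exchanges the two sides of the band. *)
Lemma chain_band : Band C connectingChain.
Proof.
  destruct chain_above as [c Hc].
  assert (Hsym : forall p q, prescribed S f S g (1 - p) (1 - q) = prescribed S f S g p q)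
    by (intros; apply prescribed_reflect; assumption).
  assert (Hcc : - c = c).
  { refine (proj1 (corner_free_constant _ C (- c) c
      (reflection_corner_free 1 connectingChain _ chain_corner Hsym) _ _));
      intros a b Hab; cbn [fst snd].
    - rewrite chain_below, Hc by lia. lia.
    - rewrite Hc, chain_below by lia. lia. }
  intros a b Hab. destruct (Z_lt_le_dec a b).
  - apply chain_below. lia.
  - rewrite Hc by lia. lia.
Qed.

End Construction.

Lemma necessity (m : nat) (S T : Z -> Prop) (f g : Z -> Z) (phi : Z * Z -> Z) :
  CompactSupport m phi -> inD m S f T g phi ->
  (forall i, S i <-> T i) /\ (forall j, imageOf S f j <-> imageOf T g j).
Proof.
  intros Hcs HD.
  destruct (band_of_compact_support m phi Hcs) as [K Hband].
  apply inD_iff_corner in HD as [_ Hcorner].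
  destruct (graph_included S T f g phi K Hband Hcorner) as [HST Hfg].
  destruct (graph_included T S g f (fun s => - phi s) K) as [HTS Hgf].
  - intros a b Hab. cbn beta. rewrite (Hband a b Hab). reflexivity.
  - intros p q. rewrite corner_opp, Hcorner. unfold prescribed. lia.
  - split; intros; split; auto.
Qed.

(* Compactly supported elements of D(x,y) are unique: their difference is a
   band-supported corner-free chain. *)
Lemma uniqueness (m : nat) (S T : Z -> Prop) (f g : Z -> Z) (phi1 phi2 : Z * Z -> Z) :
  CompactSupport m phi1 -> inD m S f T g phi1 ->
  CompactSupport m phi2 -> inD m S f T g phi2 ->
  forall s, phi1 s = phi2 s.
Proof.
  intros Hcs1 HD1 Hcs2 HD2 s.
  destruct (band_of_compact_support m phi1 Hcs1) as [K1 Hb1].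
  destruct (band_of_compact_support m phi2 Hcs2) as [K2 Hb2].
  apply inD_iff_corner in HD1 as [_ Hc1]. apply inD_iff_corner in HD2 as [_ Hc2].
  assert (Hzero : forall s, phi1 s - phi2 s = 0).
  { refine (proj2 (corner_free_constant (fun s => phi1 s - phi2 s) (Z.max K1 K2) 0 0 _ _ _)).
    - intros p q. rewrite corner_sub, Hc1, Hc2. lia.
    - intros a b H. rewrite Hb1, Hb2 by lia. reflexivity.
    - intros a b H. rewrite Hb1, Hb2 by lia. reflexivity. }
  specialize (Hzero s). lia.
Qed.

Lemma existence (m k : nat) (S T : Z -> Prop) (f g : Z -> Z) :
  (2 <= m)%nat -> LiftedPartialPerm m k S f -> LiftedPartialPerm m k T g ->
  (forall i, S i <-> T i) -> (forall j, imageOf S f j <-> imageOf T g j) ->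
  exists phi, CompactSupport m phi /\ inD m S f T g phi.
Proof.
  intros Hm HS HT HST Him.
  assert (T = S) as ->.
  { extensionality i. apply propositional_extensionality. symmetry. apply HST. }
  destruct (lpp_bounded m k S f Hm HS) as [Cf [HCf Bf]].
  destruct (lpp_bounded m k S g Hm HT) as [Cg [HCg Bg]].
  destruct (lpp_symmetric m k S f HS) as [Hf1 Hf2].
  destruct (lpp_symmetric m k S g HT) as [Hg1 Hg2].
  set (C := Z.max Cf Cg).
  assert (HC : 0 <= C) by lia.
  assert (Bf' : forall p, S p -> Z.abs (f p - p) < C) by (intros p Sp; specialize (Bf p Sp); lia).
  assert (Bg' : forall p, S p -> Z.abs (g p - p) < C) by (intros p Sp; specialize (Bg p Sp); lia).
  pose proof (lpp_injective m k S f HS). pose proof (lpp_injective m k S g HT).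
  assert (Hband : Band C (connectingChain S f g C)) by (apply chain_band; auto).
  assert (Hcorner := chain_corner S f g C Bf' Bg').
  exists (connectingChain S f g C). split.
  - exact (compact_support_of_band m _ C Hm Hband).
  - apply inD_iff_corner. split; [|exact Hcorner].
    apply (twoChain_of_corners m _ C (prescribed S f S g) Hband Hcorner).
    intros c [-> | ->] p q; apply prescribed_reflect; assumption.
Qed.

Theorem mainTheorem4 (m k : nat) (hk : (0 < k)%nat) (hkm : (k < m)%nat)
  (S T : Z -> Prop) (f g : Z -> Z)
  (HS : LiftedPartialPerm m k S f) (HT : LiftedPartialPerm m k T g) :
  ((exists phi : Z * Z -> Z, CompactSupport m phi /\ inD m S f T g phi) <->
     ((forall i, S i <-> T i) /\ (forall j, imageOf S f j <-> imageOf T g j)))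
  /\
  (forall phi1 phi2 : Z * Z -> Z,
     CompactSupport m phi1 -> inD m S f T g phi1 ->
     CompactSupport m phi2 -> inD m S f T g phi2 ->
     forall s, phi1 s = phi2 s).
Proof.
  split; [split|].
  - intros [phi [Hcs HD]]. exact (necessity m S T f g phi Hcs HD).
  - intros [HST Him]. exact (existence m k S T f g ltac:(lia) HS HT HST Him).
  - exact (uniqueness m S T f g).
Qed.
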